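(* Let $\gamma\in(0,1]$, $\varsigma(t):=\gamma t^{\gamma-1}$, and $\bm\sigma:=\big(\varsigma(\tfrac1N),\dots,\varsigma(\tfrac{N-1}N)\big)/\varsigma(\tfrac1N)\in\mathbb R^{N-1}$. Let $\mathcal S:=\{\bm\Pi\in\mathbb R^{(N-1)\times(N-1)}:0\le\Pi_{ij}\le1\ \forall i,j,\ \bm\Pi\bm e=\bm e,\ \bm\Pi^\top\bm e=\bm e\}$ and let $\bm\Pi_i$ denote the $i$-th row of $\bm\Pi$. Consider: (P$_\sigma$) $\displaystyle\min_{\bm w\in\widehat{\mathcal V},\,\bm\Pi\in\mathcal S}\bm w^\top\bar{\bm g}$ s.t. $w_i-(\bm c_{[N-1]})_i\in[-(\bm\Pi_i\bm\sigma)\underline v_i,\,(\bm\Pi_i\bm\sigma)\bar v_i]$, $i\in[N-1]$; (L$_\sigma$) $\displaystyle\max\ \Big[\bm c_{[N-1]}^\top\bar{\bm g}-\bm\eta^\top\bm c_{[N-1]}+\sum_{m=1}^M\theta_mh_m\bm c_{[N-1]}^\top\bm\Delta^m+\min_{\bm\Pi\in\mathcal S}\sum_{i=1}^{N-1}(\bm\Pi_i\bm\sigma)\big(-(\underline\lambda_i\underline v_i+\bar\lambda_i\bar v_i)\big)\Big]$ over $(\underline{\bm\lambda},\bar{\bm\lambda},\beta,\bm\eta,\bm\theta)\in\mathbb R^{N-1}\times\mathbb R^{N-1}\times\mathbb R\times\mathbb R^{N-1}\times\mathbb R^M$ with $\bar{\bm g}-\underline{\bm\lambda}+\bar{\bm\lambda}+\beta\bm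 e-\bm\eta+\sum_{m=1}^M\theta_mh_m\bm\Delta^m=\bm 0$ and $\underline{\bm\lambda},\bar{\bm\lambda},\bm\eta,\bm\theta\ge0$; (D$_\sigma$) $\displaystyle\max\ \bm c_{[N-1]}^\top\bar{\bm g}+\sum_{m=1}^M\theta_mh_m\bm c_{[N-1]}^\top\bm\Delta^m-\bm\eta^\top\bm c_{[N-1]}-\sum_{i,j}\Theta_{ij}-\underline{\bm\tau}^\top\bm e-\bar{\bm\tau}^\top\bm e$ over $\underline{\bm\lambda},\bar{\bm\lambda},\bm\eta,\underline{\bm\tau},\bar{\bm\tau}\in\mathbb R^{N-1}$, $\beta\in\mathbb R$, $\bm\theta\in\mathbb R^M$, $\bm\Theta\in\mathbb R^{(N-1)\times(N-1)}$ subject to $\bar{\bm g}-\underline{\bm\lambda}+\bar{\bm\lambda}+\beta\bm e-\bm\eta+\sum_{m=1}^M\theta_mh_m\bm\Delta^m=\bm 0$, $(-\underline{\bm\lambda}\circ\underline{\bm v}-\bar{\bm\lambda}\circ\bar{\bm v})\bm\sigma^\top+\underline{\bm\tau}\bm e^\top+\bm e\bar{\bm\tau}^\top+\bm\Theta\ge0$ (entrywise, $\circ$ the Hadamard product), $\underline{\bm\lambda},\bar{\bm\lambda},\bm\eta,\bm\theta,\bm\Theta\ge0$. Then (P$_\sigma$) and (L$_\sigma$) can both be reformulated as (D$_\sigma$): their optimal values coincide with the optimal value of (D$_\sigma$).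
   Context: Let $N\ge3$ be an integer and $\underline x=x_1<x_2<\cdots<x_N=\bar x$ real numbers; $\bm e$ denotes the all-ones vector of the appropriate dimension. Define $\bm g:[\underline x,\bar x]\to\mathbb R^{N-1}$ by $\bm g(x_1)=\bm 0$ and, for $x\in(x_i,x_{i+1}]$ ($i\in\{1,\dots,N-1\}$), $\bm g(x)=(1,\dots,1,\frac{x-x_i}{x_{i+1}-x_i},0,\dots,0)$ with the first $i-1$ entries equal to $1$, the $i$-th entry $\frac{x-x_i}{x_{i+1}-x_i}$ and the last $N-1-i$ entries $0$. For $\bm v\in\mathbb R^{N-2}$ let $\bm R\bm v:=(v_1,\dots,v_{N-2},1-\bm e^\top\bm v)\in\mathbb R^{N-1}$. Let $\bm z\in\mathbb R^n$ and $\bm\xi^1,\dots,\bm\xi^K\in\mathbb R^n$ with $\bm z^\top\bm\xi^k\in[\underline x,\bar x]$ (the distribution of $\bm\xi$ puts mass $1/K$ on each $\bm\xi^k$), and $\bar{\bm g}:=\frac1K\sum_{k=1}^K\bm g(\bm z^\top\bm\xi^k)$. Let $M\ge1$ and, for $m=1,\dots,M$, let $r_1^m\le r_3^m$ and $r_2^m$ lie in $[\underline x,\bar x]$, $p^m\in[0,1]$, $h_m\in\{-1,1\}$, and $\bm\Delta^m:=(1-p^m)\bm g(r_1^m)+p^m\bm g(r_3^m)-\bm g(r_2^m)$. Let $\mathcal V:=\{\bm v\in\mathbb R^{N-2}:\bm v\ge0,\ \bm e^\top\bm v\le1,\ h_m(\bm R\bm v)^\top\bm\Delta^m\le0,\ m\in[M]\}$,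 assumed to have nonempty interior, let $\bm c\in\mathbb R^{N-2}$ be its analytic center (maximizer over the interior of the sum of the logarithms of the slacks of the defining inequalities) and $\bm c_{[N-1]}:=\bm R\bm c$ (so $\bm e^\top\bm c_{[N-1]}=1$). For $i\in[N-1]$ let $\underline v_i:=-\min\{(\bm R\bm v)_i-(\bm c_{[N-1]})_i:\bm v\in\mathcal V\}$ and $\bar v_i:=\max\{(\bm R\bm v)_i-(\bm c_{[N-1]})_i:\bm v\in\mathcal V\}$; $\underline{\bm v}=(\underline v_i)$, $\bar{\bm v}=(\bar v_i)$. Let $\widehat{\mathcal V}:=\{\bm w\in\mathbb R^{N-1}_+:\bm e^\top\bm w=1,\ h_m\bm w^\top\bm\Delta^m\le0,\ m\in[M]\}$. Optimal values are understood in the extended reals. *)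

From HB Require Import structures.
From mathcomp Require Import all_boot all_order all_algebra.
From mathcomp Require Import all_classical all_reals all_analysis.
Set Implicit Arguments. Unset Strict Implicit. Unset Printing Implicit Defensive.
Import Order.TTheory GRing.Theory Num.Theory.
Local Open Scope classical_set_scope.
Local Open Scope ring_scope.

Section Defs.
Variable R : realType.

Definition sumv n (a : 'I_n -> R) : R := \sum_(i < n) a i.
Definition dotv n (a b : 'I_n -> R) : R := \sum_(i < n) a i * b i.

(* Breakpoints x_1 < ... < x_N are x 0 < ... < x (N-1) (0-based).
   gidx N x t = i (0-based) such that t lies in (x_i, x_{i+1}]. *)
Definition gidx (N : nat) (x : nat -> R) (t : R) : nat :=
  (\sum_(k < N) nat_of_bool (x k < t)%R)%N.-1.

(* g(t) = (1,...,1, (t - x_i)/(x_{i+1} - x_i), 0, ..., 0), with g(x_1) = 0 *)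
Definition gvec (N : nat) (x : nat -> R) (t : R) : 'I_N.-1 -> R :=
  fun j => if t <= x 0%N then 0 else
    let i := gidx N x t in
    if (val j < i)%N then 1
    else if (val j == i) then (t - x i) / (x i.+1 - x i) else 0.

(* R v = (v_1, ..., v_{N-2}, 1 - e^T v) *)
Definition Rmap (N : nat) (v : 'I_N.-2 -> R) : 'I_N.-1 -> R :=
  fun i => if (insub (val i) : option 'I_N.-2) is Some j then v j
           else 1 - sumv v.

Definition Delta (N : nat) (x : nat -> R) (M : nat)
  (p r1 r2 r3 : 'I_M -> R) (m : 'I_M) : 'I_N.-1 -> R :=
  fun j => (1 - p m) * @gvec N x (r1 m) j + p m * @gvec N x (r3 m) j
           - @gvec N x (r2 m) j.

(* the polytope V in R^{N-2}; D m plays the role of Delta^m *)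
Definition Vset (N M : nat) (h : 'I_M -> R) (D : 'I_M -> 'I_N.-1 -> R)
  : set ('I_N.-2 -> R) :=
  [set v | (forall i, 0 <= v i) /\ sumv v <= 1 /\
           (forall m, h m * dotv (Rmap v) (D m) <= 0)].

Definition nonempty_interior n (A : set ('I_n -> R)) : Prop :=
  exists v0 : 'I_n -> R, exists2 eps : R, 0 < eps &
    forall v, (forall i, `|v i - v0 i| < eps) -> A v.

Definition strictV (N M : nat) (h : 'I_M -> R) (D : 'I_M -> 'I_N.-1 -> R)
  (v : 'I_N.-2 -> R) : Prop :=
  (forall i, 0 < v i) /\ sumv v < 1 /\
  (forall m, h m * dotv (Rmap v) (D m) < 0).

Definition logbarrier (N M : nat) (h : 'I_M -> R) (D : 'I_M -> 'I_N.-1 -> R)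
  (v : 'I_N.-2 -> R) : R :=
  \sum_(i < N.-2) ln (v i) + ln (1 - sumv v) +
  \sum_(m < M) ln (- (h m * dotv (Rmap v) (D m))).

Definition is_analytic_center (N M : nat) (h : 'I_M -> R)
  (D : 'I_M -> 'I_N.-1 -> R) (c : 'I_N.-2 -> R) : Prop :=
  strictV h D c /\
  (forall v, strictV h D v -> logbarrier h D v <= logbarrier h D c).

Definition vlow (N M : nat) (h : 'I_M -> R) (D : 'I_M -> 'I_N.-1 -> R)
  (c : 'I_N.-2 -> R) (i : 'I_N.-1) : R :=
  - inf [set Rmap v i - Rmap c i | v in Vset h D].
Definition vup (N M : nat) (h : 'I_M -> R) (D : 'I_M -> 'I_N.-1 -> R)
  (c : 'I_N.-2 -> R) (i : 'I_N.-1) : R :=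
  sup [set Rmap v i - Rmap c i | v in Vset h D].

Definition hatV (N M : nat) (h : 'I_M -> R) (D : 'I_M -> 'I_N.-1 -> R)
  : set ('I_N.-1 -> R) :=
  [set w | (forall i, 0 <= w i) /\ sumv w = 1 /\
           (forall m, h m * dotv w (D m) <= 0)].

Definition Sset n : set ('I_n -> 'I_n -> R) :=
  [set P | (forall i j, 0 <= P i j <= 1) /\
           (forall i, \sum_(j < n) P i j = 1) /\
           (forall j, \sum_(i < n) P i j = 1)].

Definition varsigma (gamma t : R) : R := gamma * t `^ (gamma - 1).

Definition sigmav (N : nat) (gamma : R) : 'I_N.-1 -> R :=
  fun j => varsigma gamma ((val j).+1%:R / N%:R) / varsigma gamma (1 / N%:R).

Definition rowdot n (P : 'I_n -> 'I_n -> R) (s : 'I_n -> R) (i : 'I_n) : R :=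
  \sum_(j < n) P i j * s j.

Local Open Scope ereal_scope.

Definition Pval (N M : nat) (h : 'I_M -> R) (D : 'I_M -> 'I_N.-1 -> R)
  (gbar cN vl vu s : 'I_N.-1 -> R) : \bar R :=
  ereal_inf [set y | exists w P, hatV h D w /\ Sset P /\
     (forall i, (- (rowdot P s i * vl i) <= w i - cN i
                 <= rowdot P s i * vu i)%R) /\
     y = (dotv w gbar)%:E].

Definition eqcons (N M : nat) (h : 'I_M -> R) (D : 'I_M -> 'I_N.-1 -> R)
  (gbar ll lu : 'I_N.-1 -> R) (beta : R) (eta : 'I_N.-1 -> R)
  (theta : 'I_M -> R) : Prop :=
  forall i, (gbar i - ll i + lu i + beta - eta i
             + \sum_(m < M) theta m * h m * D m i = 0)%R.

Definition Lval (N M : nat) (h : 'I_M -> R) (D : 'I_M -> 'I_N.-1 -> R)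
  (gbar cN vl vu s : 'I_N.-1 -> R) : \bar R :=
  ereal_sup [set y | exists (ll lu : 'I_N.-1 -> R) (beta : R)
       (eta : 'I_N.-1 -> R) (theta : 'I_M -> R),
     eqcons h D gbar ll lu beta eta theta /\
     (forall i, 0 <= ll i)%R /\ (forall i, 0 <= lu i)%R /\
     (forall i, 0 <= eta i)%R /\ (forall m, 0 <= theta m)%R /\
     y = (dotv cN gbar - dotv eta cN
          + \sum_(m < M) theta m * h m * dotv cN (D m))%:E
         + ereal_inf [set (\sum_(i < N.-1)
                             rowdot P s i * (- (ll i * vl i + lu i * vu i)))%:E
                     | P in @Sset N.-1]].

Definition Dval (N M : nat) (h : 'I_M -> R) (D : 'I_M -> 'I_N.-1 -> R)
  (gbar cN vl vu s : 'I_N.-1 -> R) : \bar R :=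
  ereal_sup [set y | exists (ll lu eta taul tauu : 'I_N.-1 -> R) (beta : R)
       (theta : 'I_M -> R) (Theta : 'I_N.-1 -> 'I_N.-1 -> R),
     eqcons h D gbar ll lu beta eta theta /\
     (forall i j, 0 <= (- (ll i * vl i) - lu i * vu i) * s j
                       + taul i + tauu j + Theta i j)%R /\
     (forall i, 0 <= ll i)%R /\ (forall i, 0 <= lu i)%R /\
     (forall i, 0 <= eta i)%R /\ (forall m, 0 <= theta m)%R /\
     (forall i j, 0 <= Theta i j)%R /\
     y = (dotv cN gbar + \sum_(m < M) theta m * h m * dotv cN (D m)
          - dotv eta cN - \sum_(i < N.-1) \sum_(j < N.-1) Theta i j
          - sumv taul - sumv tauu)%:E].

End Defs.

From Pilot Require Import Defs.
From HB Require Import structures.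
From mathcomp Require Import all_boot all_order all_algebra.
From mathcomp Require Import all_classical all_reals all_analysis.
From mathcomp Require Import lra ring.
Import Order.TTheory GRing.Theory Num.Theory.
Local Open Scope classical_set_scope.
Local Open Scope ring_scope.
Set Implicit Arguments. Unset Strict Implicit. Unset Printing Implicit Defensive.

(* The three values are compared in a cycle.  (L) <= (P) is weak duality:
   for feasible (w, Pi) the equality constraint of (L) rewrites w^T gbar as
   the objective of (L) plus terms whose signs are fixed by the box
   constraints.  (D) <= (L) because, against a doubly stochastic Pi, the
   multipliers (tau, Theta) of (D) bound the inner minimum of (L) from below.
   (P) <= (D) is strong duality for (P) read as one linear program in the
   joint variable (w, Pi), feasible at (c_[N-1], I) since the analytic centre
   lies in V: for r below the value of (P) the program with the extra row
   w^T gbar <= r is infeasible, and Farkas' lemma, proved by Fourier-Motzkin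
   elimination, turns this into a feasible point of (D) of value above r. *)

Lemma exists_between (R : realDomainType) (I : finType) (lo up : pred I) (f : I -> R) :
  (forall p q, lo p -> up q -> f p <= f q) ->
  exists t, (forall p, lo p -> f p <= t) /\ (forall q, up q -> t <= f q).
Proof.
move=> lo_up; case: (pickP lo) => [p0 lo_p0|lo0].
  exists (\big[Num.max/f p0]_(p | lo p) f p); split=> [p|q up_q].
    exact: le_bigmax_cond.
  by apply: bigmax_le => [|p lo_p]; apply: lo_up.
exists (\big[Num.min/0]_(q | up q) f q); split=> [p|q]; first by rewrite lo0.
exact: bigmin_le_cond.
Qed.

Section FourierMotzkin.
Variables (R : realFieldType) (V C : finType) (A : C -> V -> R) (b : C -> R).

Local Notation cstr := ((V -> R) * R)%type.

Definition sat (x : V -> R) (c : cstr) := \sum_v c.1 v * x v <= c.2.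
Definition slack (c : cstr) (x : V -> R) := c.2 - \sum_v c.1 v * x v.
Definition lincomb (al be : R) (c d : cstr) : cstr :=
  (fun v => al * c.1 v + be * d.1 v, al * c.2 + be * d.2).
Definition cstr0 : cstr := (fun _ => 0, 0).

Definition in_row_cone (c : cstr) := exists2 y : C -> R, (forall k, 0 <= y k) &
  (forall v, c.1 v = \sum_k y k * A k v) /\ c.2 = \sum_k y k * b k.

Lemma satE x c : sat x c = (0 <= slack c x).
Proof. by rewrite /sat /slack subr_ge0. Qed.

Lemma slack_lincomb al be c d x :
  slack (lincomb al be c d) x = al * slack c x + be * slack d x.
Proof.
rewrite /slack /= !mulrBr addrACA -opprD; congr (_ - _).
by rewrite !mulr_sumr -big_split; apply: eq_bigr => v _ /=; ring.
Qed.

Lemma in_row_cone0 : in_row_cone cstr0.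
Proof.
exists (fun _ => 0) => // ; split=> [v|] /=; by rewrite big1 // => k _; rewrite mul0r.
Qed.

Lemma in_row_cone_row k : in_row_cone (A k, b k).
Proof.
exists (fun j => (j == k)%:R) => [j|]; first exact: ler0n.
by split=> [v|] /=; rewrite (bigD1 k) //= eqxx mul1r big1 ?addr0 // => j /negbTE ->;
  rewrite mul0r.
Qed.

Lemma in_row_cone_lincomb al be c d : 0 <= al -> 0 <= be ->
  in_row_cone c -> in_row_cone d -> in_row_cone (lincomb al be c d).
Proof.
move=> al0 be0 [y y0 [yA yb]] [z z0 [zA zb]].
exists (fun k => al * y k + be * z k) => [k|]; first by rewrite addr_ge0 ?mulr_ge0.
split=> [v|] /=; rewrite ?yA ?zA ?yb ?zb !mulr_sumr -big_split /=;
  by apply: eq_bigr => k _; ring.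
Qed.

Definition upd (x : V -> R) v t u := if u == v then t else x u.

Lemma slack_upd c x v t : slack c (upd x v t) = slack c x - c.1 v * (t - x v).
Proof.
rewrite /slack (bigD1 v) //= [in RHS](bigD1 v) //= /upd eqxx.
under eq_bigr => u /negbTE uv do rewrite uv.
ring.
Qed.

Section Elimination.
Variables (I : finType) (L : I -> cstr) (v : V).

Definition fm_elim (j : I + I * I) : cstr :=
  match j with
  | inl i => if (L i).1 v == 0 then L i else cstr0
  | inr (p, q) => if (0 < (L p).1 v) && ((L q).1 v < 0)
                  then lincomb (- (L q).1 v) ((L p).1 v) (L p) (L q) else cstr0
  end.

Lemma fm_elim_coef_v j : (fm_elim j).1 v = 0.
Proof.
case: j => [i|[p q]] /=; first by case: ifP => [/eqP|].
by case: ifP => //= _; ring.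
Qed.

Lemma fm_elim_coef u : (forall i, (L i).1 u = 0) -> forall j, (fm_elim j).1 u = 0.
Proof.
move=> L0 [i|[p q]] /=; first by case: ifP.
by case: ifP => //= _; rewrite !L0 !mulr0 addr0.
Qed.

Lemma fm_elim_cone : (forall i, in_row_cone (L i)) -> forall j, in_row_cone (fm_elim j).
Proof.
move=> Lc [i|[p q]] /=; first by case: ifP => _; [exact: Lc | exact: in_row_cone0].
case: ifP => [/andP[p0 q0]|_]; last exact: in_row_cone0.
by apply: in_row_cone_lincomb => //; rewrite ?oppr_ge0 ltW.
Qed.

(* Each constraint with a nonzero coefficient on v bounds the shift t of x v;
   the rows [inr (p, q)] say that no lower bound exceeds an upper bound. *)
Lemma fm_elim_sat x : (forall j, sat x (fm_elim j)) ->
  exists t, forall i, sat (upd x v t) (L i).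
Proof.
move=> xsat; pose a i := (L i).1 v; pose bnd i := slack (L i) x / a i.
have lo_up q p : a q < 0 -> 0 < a p -> bnd q <= bnd p.
  move=> aq0 ap0; have := xsat (inr (p, q)); rewrite /= ap0 aq0 satE slack_lincomb.
  by rewrite /bnd ler_ndivrMr // mulrAC ler_pdivrMr // /a; lra.
have [t [t_lo t_up]] := exists_between lo_up.
exists (x v + t) => i; rewrite satE slack_upd [x v + t]addrC addrK.
case: (ltgtP (a i) 0) => [ai0|ai0|ai0].
- by have := t_lo i ai0; rewrite /bnd ler_ndivrMr // subr_ge0 mulrC.
- by have := t_up i ai0; rewrite /bnd ler_pdivlMr // subr_ge0 mulrC.
- by have := xsat (inl i); rewrite /= -/(a i) ai0 eqxx satE mul0r subr0.
Qed.

End Elimination.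

Lemma fm_infeasible (s : seq V) (I : finType) (L : I -> cstr) :
  (forall i, in_row_cone (L i)) -> (forall i u, u \notin s -> (L i).1 u = 0) ->
  ~ (exists x, forall i, sat x (L i)) ->
  exists2 r, r < 0 & in_row_cone (fun _ => 0, r).
Proof.
elim: s I L => [|v s IHs] I L Lc Ls Linfeas.
  have /existsNP[i Li] : ~ forall i, sat (fun _ => 0) (L i).
    by move=> L0; apply: Linfeas; exists (fun _ => 0).
  exists (L i).2.
    by rewrite ltNge; apply/negP => L0; apply: Li; rewrite /sat big1 // => u _; rewrite mulr0.
  by have [y y0 [yA yb]] := Lc i; exists y => //; split=> // u; rewrite -yA Ls.
apply: (IHs _ (fm_elim L v)); first exact: fm_elim_cone.
  move=> j u us; have [->|uv] := eqVneq u v; first exact: fm_elim_coef_v.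
  by apply: fm_elim_coef => i; apply: Ls; rewrite inE negb_or uv.
by move=> [x /fm_elim_sat[t tsat]]; apply: Linfeas; exists (upd x v t).
Qed.

Lemma farkas : ~ (exists x, forall k, \sum_v A k v * x v <= b k) ->
  exists2 y : C -> R, (forall k, 0 <= y k) &
    (forall v, \sum_k y k * A k v = 0) /\ \sum_k y k * b k < 0.
Proof.
move=> infeas.
have [r r0 [y y0 [yA yb]]] : exists2 r, r < 0 & in_row_cone (fun _ => 0, r).
  apply: (@fm_infeasible (enum V) C (fun k => (A k, b k))) => // [k|k u].
  - exact: in_row_cone_row.
  - by rewrite mem_enum.
by exists y => //; split=> [v|]; rewrite -?yA -?yb.
Qed.

End FourierMotzkin.

Lemma sumr_option (R : nmodType) (C : finType) (F : option C -> R) :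
  \sum_k F k = F None + \sum_k F (Some k).
Proof.
rewrite (bigD1 None) //=; congr (_ + _).
rewrite (reindex_omap Some id) //=; last by case.
by apply: eq_bigl => k; rewrite eqxx.
Qed.

(* Farkas applied to the system augmented by the row [c x <= r]: its
   multiplier is positive because the system itself is feasible. *)
Lemma lp_certificate (R : realFieldType) (V C : finType) (A : C -> V -> R)
    (b : C -> R) (c : V -> R) (r : R) :
  (exists x, forall k, \sum_v A k v * x v <= b k) ->
  (forall x, (forall k, \sum_v A k v * x v <= b k) -> r < \sum_v c v * x v) ->
  exists2 y : C -> R, (forall k, 0 <= y k) &
    (forall v, c v + \sum_k y k * A k v = 0) /\ r < - \sum_k y k * b k.
Proof.
move=> [x0 x0feas] r_lt.
pose A' k v := if k is Some k then A k v else c v.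
pose b' k := if k is Some k then b k else r.
have [y y0 [yA yb]] : exists2 y : option C -> R, (forall k, 0 <= y k) &
    (forall v, \sum_k y k * A' k v = 0) /\ \sum_k y k * b' k < 0.
  apply: farkas => -[x xfeas]; have := r_lt x (fun k => xfeas (Some k)).
  by have := xfeas None; rewrite /=; lra.
have yx0 : \sum_k y k * (\sum_v A' k v * x0 v) = 0.
  under eq_bigr do rewrite mulr_sumr.
  rewrite exchange_big big1 // => v _.
  transitivity (x0 v * \sum_k y k * A' k v); last by rewrite yA mulr0.
  by rewrite mulr_sumr; apply: eq_bigr => k _; ring.
have yN0 : 0 < y None.
  rewrite lt_def y0 andbT; apply/eqP => yN0.
  suff : \sum_k y k * (\sum_v A' k v * x0 v) <= \sum_k y k * b' k by lra.
  apply: ler_sum => -[k|] _; last by rewrite yN0 !mul0r.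
  by rewrite /A' /b'; apply: ler_wpM2l; [exact: y0 | exact: x0feas].
exists (fun k => y (Some k) / y None) => [k|]; first by rewrite divr_ge0 // ltW.
have sum_div F : \sum_k y (Some k) / y None * F k = (\sum_k y (Some k) * F k) / y None.
  by rewrite mulr_suml; apply: eq_bigr => k _; ring.
split=> [v|]; rewrite sum_div.
  have := yA v; rewrite sumr_option /= => yAv.
  by apply: (mulIf (lt0r_neq0 yN0)); rewrite mul0r mulrDl divfK ?gt_eqF //; lra.
by move: yb; rewrite sumr_option /= -mulNr ltr_pdivlMr //; lra.
Qed.

Lemma lee_EFin_approx (R : realType) (a b : \bar R) :
  (forall r : R, (r%:E < a)%E -> (r%:E <= b)%E) -> (a <= b)%E.
Proof.
case: a => [a| |] ab; last by rewrite leNye.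
- case: b ab => [b| |] ab; [|by rewrite leey|].
    rewrite lee_fin leNgt; apply/negP => ba.
    have mid_a : (a + b) / 2 < a by lra.
    by have := ab ((a + b) / 2); rewrite !lte_fin lee_fin => /(_ mid_a); lra.
  by have := ab (a - 1); rewrite lte_fin ltrBlDr ltrDl ltr01 => /(_ isT).
- case: b ab => [b| |] ab; [|by []|by have := ab 0; rewrite ltry leeNy_eq => /(_ isT)].
  by have := ab (b + 1); rewrite ltry lee_fin => /(_ isT) ?; exfalso; lra.
Qed.

Lemma sum_delta (R : nmodType) (T : finType) (a : T) (G : T -> R) :
  (forall t, t != a -> G t = 0) -> \sum_t G t = G a.
Proof. by move=> G0; rewrite (bigD1 a) //= big1 ?addr0. Qed.
Arguments sum_delta {R T} a {G}.

Lemma sum_pair (R : nmodType) (I J : finType) (G : I * J -> R) :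
  \sum_p G p = \sum_i \sum_j G (i, j).
Proof. by rewrite pair_bigA; apply: eq_bigr => -[]. Qed.

Lemma sumr_if_eq_mul (R : pzSemiRingType) (T : finType) (a : T) (F G : T -> R) :
  \sum_t (if t == a then G t else 0) * F t = G a * F a.
Proof. by rewrite (sum_delta a) ?eqxx // => t /negbTE ->; rewrite mul0r. Qed.

Lemma sumr_mul_if_eq (R : pzSemiRingType) (T : finType) (a : T) (F G : T -> R) :
  \sum_t F t * (if a == t then G t else 0) = F a * G a.
Proof.
by rewrite (sum_delta a) ?eqxx // => t; rewrite eq_sym => /negbTE ->; rewrite mulr0.
Qed.

Lemma sumr_mul0 (R : pzSemiRingType) (T : finType) (F : T -> R) : \sum_t F t * 0 = 0.
Proof. by rewrite big1 // => t _; rewrite mulr0. Qed.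

Lemma sumr_0mul (R : pzSemiRingType) (T : finType) (F : T -> R) : \sum_t 0 * F t = 0.
Proof. by rewrite big1 // => t _; rewrite mul0r. Qed.

Section WeakDuality.
Variables (R : realType) (N M : nat) (h : 'I_M -> R) (D : 'I_M -> 'I_N.-1 -> R)
  (gbar cN vl vu s : 'I_N.-1 -> R).
Local Notation n := N.-1.

Lemma eqcons_dotv ll lu beta eta theta (w : 'I_n -> R) :
  eqcons h D gbar ll lu beta eta theta -> sumv w = 1 ->
  dotv w gbar = dotv ll w - dotv lu w - beta + dotv eta w
                - \sum_(m < M) theta m * h m * dotv w (D m).
Proof.
move=> E w1.
have -> : \sum_(m < M) theta m * h m * dotv w (D m) =
          \sum_i w i * \sum_(m < M) theta m * h m * D m i.
  rewrite /dotv; under eq_bigr do rewrite mulr_sumr.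
  by rewrite exchange_big; apply: eq_bigr => i _; rewrite mulr_sumr;
    apply: eq_bigr => m _; ring.
have -> : beta = \sum_i w i * beta by rewrite -mulr_suml -/(sumv w) w1 mul1r.
rewrite /dotv -!sumrN -!big_split /=; apply: eq_bigr => i _.
have -> : gbar i = ll i - lu i - beta + eta i - \sum_(m < M) theta m * h m * D m i.
  by have := E i; lra.
ring.
Qed.

Local Open Scope ereal_scope.

Lemma Lval_le_Pval : (sumv cN = 1)%R ->
  Lval h D gbar cN vl vu s <= Pval h D gbar cN vl vu s.
Proof.
move=> cN1; apply: le_ereal_inf_tmp => _ [w [P [[w0 [w1 wD]] [PS [wbox ->]]]]].
apply: ge_ereal_sup => _ [ll [lu [beta [eta [theta [E [ll0 [lu0 [eta0 [theta0 ->]]]]]]]]]].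
set S := [set _ | P in _].
have SP : S (\sum_(i < n) rowdot P s i * - (ll i * vl i + lu i * vu i))%:E.
  by exists P.
apply: le_trans (leeD (lexx _) (ereal_inf_lbound SP)) _.
rewrite -EFinD lee_fin (eqcons_dotv E w1) (eqcons_dotv E cN1).
have etaw : (0 <= dotv eta w)%R by apply: sumr_ge0 => i _; apply: mulr_ge0.
have thetaw : (\sum_(m < M) theta m * h m * dotv w (D m) <= 0)%R.
  by apply: sumr_le0 => m _; rewrite -mulrA; apply: mulr_ge0_le0.
suff : (dotv ll cN - dotv lu cN +
   \sum_(i < n) rowdot P s i * - (ll i * vl i + lu i * vu i) <=
   dotv ll w - dotv lu w)%R by lra.
rewrite /dotv -!sumrN -!big_split /=; apply: ler_sum => i _.
have lo : (0 <= ll i * (w i - cN i + rowdot P s i * vl i))%R.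
  by apply: mulr_ge0 => //; have := wbox i; lra.
have up : (0 <= lu i * (cN i + rowdot P s i * vu i - w i))%R.
  by apply: mulr_ge0 => //; have := wbox i; lra.
lra.
Qed.

Lemma Dval_le_Lval : Dval h D gbar cN vl vu s <= Lval h D gbar cN vl vu s.
Proof.
apply: ge_ereal_sup => _ [ll [lu [eta [taul [tauu [beta [theta [Th
   [E [ThP [ll0 [lu0 [eta0 [theta0 [Th0 ->]]]]]]]]]]]]]]].
apply: le_trans (ereal_sup_ubound _); last first.
  by exists ll, lu, beta, eta, theta; do 5 (split => //).
rewrite [X in X%:E](_ : _ =
   (dotv cN gbar - dotv eta cN + \sum_(m < M) theta m * h m * dotv cN (D m)) +
   (- \sum_(i < n) \sum_(j < n) Th i j - sumv taul - sumv tauu))%R; last by ring.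
rewrite EFinD; apply: leeD => //.
apply: le_ereal_inf_tmp => _ [P [P01 [Prow Pcol]] <-]; rewrite lee_fin.
have P0 i j : (0 <= P i j)%R by have /andP[] := P01 i j.
have sum_tau : (\sum_i \sum_j P i j * (taul i + tauu j) = sumv taul + sumv tauu)%R.
  have taul_sum : (\sum_i \sum_j P i j * taul i = sumv taul)%R.
    by apply: eq_bigr => i _; rewrite -mulr_suml Prow mul1r.
  have tauu_sum : (\sum_i \sum_j P i j * tauu j = sumv tauu)%R.
    by rewrite exchange_big; apply: eq_bigr => j _; rewrite -mulr_suml Pcol mul1r.
  rewrite -taul_sum -tauu_sum -big_split; apply: eq_bigr => i _.
  by rewrite -big_split; apply: eq_bigr => j _; rewrite mulrDr.
have sum_Th : (\sum_i \sum_j P i j * Th i j <= \sum_(i < n) \sum_(j < n) Th i j)%R.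
  apply: ler_sum => i _; apply: ler_sum => j _; apply: ler_piMl => //.
  by have /andP[] := P01 i j.
have lin : (\sum_i \sum_j P i j * (- (taul i + tauu j) - Th i j) =
  - \sum_i \sum_j P i j * (taul i + tauu j) - \sum_i \sum_j P i j * Th i j)%R.
  rewrite -!sumrN -big_split; apply: eq_bigr => i _.
  by rewrite -!sumrN -big_split; apply: eq_bigr => j _ /=; ring.
have -> : (\sum_(i < n) rowdot P s i * - (ll i * vl i + lu i * vu i) =
   \sum_i \sum_j P i j * ((- (ll i * vl i) - lu i * vu i) * s j))%R.
  by apply: eq_bigr => i _; rewrite /rowdot mulr_suml; apply: eq_bigr => j _; ring.
suff : (\sum_i \sum_j P i j * (- (taul i + tauu j) - Th i j) <=
   \sum_i \sum_j P i j * ((- (ll i * vl i) - lu i * vu i) * s j))%R by lra.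
apply: ler_sum => i _; apply: ler_sum => j _; apply: ler_wpM2l; first exact: P0.
by have := ThP i j; lra.
Qed.

End WeakDuality.

(* The rows of (P) as a system of inequalities in (w, Pi); an equality is
   encoded by the pair of rows (-1)^+b * lhs <= (-1)^+b, and Pi <= 1 is
   omitted since it follows from Pi >= 0 and the row sums. *)
Inductive psigma_row (n M : nat) :=
| WNonneg of 'I_n
| WSum of bool
| WCut of 'I_M
| PiNonneg of 'I_n * 'I_n
| PiRow of bool & 'I_n
| PiCol of bool & 'I_n
| WLower of 'I_n
| WUpper of 'I_n.
Arguments WNonneg {n M}. Arguments WSum {n M}. Arguments WCut {n M}.
Arguments PiNonneg {n M}. Arguments PiRow {n M}. Arguments PiCol {n M}.
Arguments WLower {n M}. Arguments WUpper {n M}.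

Section PsigmaRowFinite.
Variables n M : nat.
Local Notation code := ('I_n + (bool + ('I_M + ('I_n * 'I_n +
  (bool * 'I_n + (bool * 'I_n + ('I_n + 'I_n)))))))%type.

Definition code_of_row (k : psigma_row n M) : code :=
  match k with
  | WNonneg i => inl i
  | WSum b => inr (inl b)
  | WCut m => inr (inr (inl m))
  | PiNonneg p => inr (inr (inr (inl p)))
  | PiRow b i => inr (inr (inr (inr (inl (b, i)))))
  | PiCol b j => inr (inr (inr (inr (inr (inl (b, j))))))
  | WLower i => inr (inr (inr (inr (inr (inr (inl i))))))
  | WUpper i => inr (inr (inr (inr (inr (inr (inr i))))))
  end.

Definition row_of_code (u : code) : psigma_row n M :=
  match u with
  | inl i => WNonneg i
  | inr (inl b) => WSum b
  | inr (inr (inl m)) => WCut m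
  | inr (inr (inr (inl p))) => PiNonneg p
  | inr (inr (inr (inr (inl (b, i))))) => PiRow b i
  | inr (inr (inr (inr (inr (inl (b, j)))))) => PiCol b j
  | inr (inr (inr (inr (inr (inr (inl i)))))) => WLower i
  | inr (inr (inr (inr (inr (inr (inr i)))))) => WUpper i
  end.

Lemma code_of_rowK : cancel code_of_row row_of_code. Proof. by case. Qed.
Lemma row_of_codeK : cancel row_of_code code_of_row.
Proof. by case=> [|[|[|[|[[]|[[]|[]]]]]]]. Qed.

HB.instance Definition _ := Finite.copy (psigma_row n M) (can_type code_of_rowK).

Lemma sum_psigma_row (R : nmodType) (F : psigma_row n M -> R) :
  \sum_(k : psigma_row n M) F k = \sum_i F (WNonneg i) + \sum_b F (WSum b) + \sum_m F (WCut m)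
    + \sum_p F (PiNonneg p) + \sum_b \sum_i F (PiRow b i)
    + \sum_b \sum_j F (PiCol b j) + \sum_i F (WLower i) + \sum_i F (WUpper i).
Proof.
rewrite (reindex row_of_code); last first.
  by exists code_of_row => u _; rewrite ?row_of_codeK ?code_of_rowK.
by rewrite !big_sumType /= !sum_pair !addrA.
Qed.

End PsigmaRowFinite.

Section PrimalLP.
Variables (R : realType) (N M : nat) (h : 'I_M -> R) (D : 'I_M -> 'I_N.-1 -> R)
  (gbar cN vl vu s : 'I_N.-1 -> R).
Local Notation n := N.-1.
Local Notation var := ('I_n + 'I_n * 'I_n)%type.
Local Notation row := (psigma_row n M).

Definition wpart (x : var -> R) i := x (inl i).
Definition Pipart (x : var -> R) i j := x (inr (i, j)).

Definition lp_row (k : row) (x : var -> R) : R :=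
  match k with
  | WNonneg i => - wpart x i
  | WSum b => (-1) ^+ b * sumv (wpart x)
  | WCut m => h m * dotv (wpart x) (D m)
  | PiNonneg p => - x (inr p)
  | PiRow b i => (-1) ^+ b * \sum_j Pipart x i j
  | PiCol b j => (-1) ^+ b * \sum_i Pipart x i j
  | WLower i => - wpart x i - rowdot (Pipart x) s i * vl i
  | WUpper i => wpart x i - rowdot (Pipart x) s i * vu i
  end.

Definition lp_rhs (k : row) : R :=
  match k with
  | WSum b | PiRow b _ | PiCol b _ => (-1) ^+ b
  | WLower i => - cN i
  | WUpper i => cN i
  | _ => 0
  end.

Definition lp_coef (k : row) (v : var) : R :=
  match k, v with
  | WNonneg i, inl u => if u == i then -1 else 0
  | WSum b, inl _ => (-1) ^+ b
  | WCut m, inl u => h m * D m u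
  | PiNonneg p, inr u => if u == p then -1 else 0
  | PiRow b i, inr u => if u.1 == i then (-1) ^+ b else 0
  | PiCol b j, inr u => if u.2 == j then (-1) ^+ b else 0
  | WLower i, inl u => if u == i then -1 else 0
  | WLower i, inr u => if u.1 == i then - (s u.2 * vl i) else 0
  | WUpper i, inl u => if u == i then 1 else 0
  | WUpper i, inr u => if u.1 == i then - (s u.2 * vu i) else 0
  | _, _ => 0
  end.

Definition lp_obj (v : var) : R := if v is inl i then gbar i else 0.

Lemma lp_coefE k x : \sum_v lp_coef k v * x v = lp_row k x.
Proof.
rewrite big_sumType /=.
case: k => [i|b|m|p|b i|b j|i|i] /=; rewrite ?sumr_0mul ?add0r ?addr0.
- by rewrite sumr_if_eq_mul mulN1r.
- by rewrite -mulr_sumr.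
- by rewrite /dotv mulr_sumr; apply: eq_bigr => u _; rewrite /wpart; ring.
- by rewrite sumr_if_eq_mul mulN1r.
- by rewrite sum_pair /=; under eq_bigr do rewrite -mulr_sumr; rewrite sumr_if_eq_mul.
- rewrite sum_pair exchange_big /=.
  by under eq_bigr do rewrite -mulr_sumr; rewrite sumr_if_eq_mul.
- rewrite sumr_if_eq_mul mulN1r sum_pair /= (sum_delta i) ?eqxx; last first.
    by move=> t /negbTE ti; rewrite big1 // => j _; rewrite ti mul0r.
  rewrite /rowdot /wpart /Pipart mulr_suml -sumrN; congr (_ + _).
  by apply: eq_bigr => j _; ring.
- rewrite sumr_if_eq_mul mul1r sum_pair /= (sum_delta i) ?eqxx; last first.
    by move=> t /negbTE ti; rewrite big1 // => j _; rewrite ti mul0r.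
  rewrite /rowdot /wpart /Pipart mulr_suml -sumrN; congr (_ + _).
  by apply: eq_bigr => j _; ring.
Qed.

Lemma lp_objE x : \sum_v lp_obj v * x v = dotv (wpart x) gbar.
Proof.
rewrite big_sumType /= sumr_0mul addr0.
by apply: eq_bigr => i _; rewrite mulrC.
Qed.

Definition dual_beta (y : row -> R) := y (WSum false) - y (WSum true).
Definition dual_taul (y : row -> R) i := y (PiRow false i) - y (PiRow true i).
Definition dual_tauu (y : row -> R) j := y (PiCol false j) - y (PiCol true j).

Lemma lp_colsum_w (y : row -> R) i : \sum_k y k * lp_coef k (inl i) =
  - y (WNonneg i) + dual_beta y + \sum_m y (WCut m) * h m * D m i
  - y (WLower i) + y (WUpper i).
Proof.
rewrite sum_psigma_row /= !big_bool /= !sumr_mul0 !sumr_mul_if_eq /dual_beta.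
under eq_bigr do rewrite mulrA.
by rewrite expr0 expr1; ring.
Qed.

Lemma lp_colsum_Pi (y : row -> R) i j : \sum_k y k * lp_coef k (inr (i, j)) =
  - y (PiNonneg (i, j)) + dual_taul y i + dual_tauu y j
  - y (WLower i) * (s j * vl i) - y (WUpper i) * (s j * vu i).
Proof.
rewrite sum_psigma_row /= !big_bool /= !sumr_mul0 !sumr_mul_if_eq.
by rewrite /dual_taul /dual_tauu expr0 expr1; ring.
Qed.

Lemma lp_rhs_sum (y : row -> R) : \sum_k y k * lp_rhs k =
  dual_beta y + sumv (dual_taul y) + sumv (dual_tauu y)
  - dotv (fun i => y (WLower i)) cN + dotv (fun i => y (WUpper i)) cN.
Proof.
rewrite sum_psigma_row /= !big_bool /= !sumr_mul0 expr0 expr1 -!mulr_suml.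
under eq_bigr do rewrite mulrN.
rewrite sumrN /dual_beta /dual_taul /dual_tauu /sumv !sumrB /dotv /=.
ring.
Qed.

Definition lp_start (v : var) : R :=
  match v with inl i => cN i | inr (i, j) => if i == j then 1 else 0 end.

Lemma lp_start_feasible : hatV h D cN -> (forall i, 0 <= vl i) ->
  (forall i, 0 <= vu i) -> (forall j, 0 <= s j) -> forall k, lp_row k lp_start <= lp_rhs k.
Proof.
move=> [cN0 [cN1 cND]] vl0 vu0 s0.
have rowdot_start i : rowdot (Pipart lp_start) s i = s i.
  rewrite /rowdot (sum_delta i) /Pipart /= ?eqxx ?mul1r // => j.
  by rewrite eq_sym => /negbTE ->; rewrite mul0r.
have row_start i : \sum_j Pipart lp_start i j = 1.
  by rewrite (sum_delta i) /Pipart /= ?eqxx // => j; rewrite eq_sym => /negbTE ->.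
have col_start j : \sum_i Pipart lp_start i j = 1.
  by rewrite (sum_delta j) /Pipart /= ?eqxx // => i /negbTE ->.
case=> [i|b|m|[i j]|b i|b j|i|i] /=.
- by rewrite oppr_le0.
- by rewrite cN1 mulr1.
- exact: cND.
- by rewrite oppr_le0; case: eqP.
- by rewrite row_start mulr1.
- by rewrite col_start mulr1.
- by rewrite rowdot_start gerDl oppr_le0 mulr_ge0.
- by rewrite rowdot_start gerDl oppr_le0 mulr_ge0.
Qed.

Lemma lp_feasible_Psigma x : (forall k, lp_row k x <= lp_rhs k) ->
  (Pval h D gbar cN vl vu s <= (dotv (wpart x) gbar)%:E)%E.
Proof.
move=> xfeas; apply: ereal_inf_lbound; exists (wpart x), (Pipart x).
have eq_sign (a : R) : (forall b : bool, (-1) ^+ b * a <= (-1) ^+ b) -> a = 1.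
  by move=> abnd; have := abnd false; have := abnd true; rewrite expr0 expr1; lra.
have row1 i : \sum_j Pipart x i j = 1 by apply: eq_sign => b; exact: xfeas (PiRow b i).
have col1 j : \sum_i Pipart x i j = 1 by apply: eq_sign => b; exact: xfeas (PiCol b j).
have P0 i j : 0 <= Pipart x i j by rewrite -oppr_le0; exact: xfeas (PiNonneg (i, j)).
split; [split; [|split]|split; [split; [|split]|split]] => //.
- by move=> i; rewrite -oppr_le0; exact: xfeas (WNonneg i).
- by apply: eq_sign => b; exact: xfeas (WSum b).
- by move=> m; exact: xfeas (WCut m).
- move=> i j; rewrite P0 -(row1 i) (bigD1 j) //= lerDl.
  by apply: sumr_ge0 => k _.
- move=> i; have := xfeas (WLower i); have := xfeas (WUpper i); rewrite /=.
  by move=> up lo; apply/andP; split; lra.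
Qed.

Lemma lp_certificate_Dval (y : row -> R) (r : R) : sumv cN = 1 ->
  (forall k, 0 <= y k) -> (forall v, lp_obj v + \sum_k y k * lp_coef k v = 0) ->
  r < - \sum_k y k * lp_rhs k -> (r%:E <= Dval h D gbar cN vl vu s)%E.
Proof.
move=> cN1 y0 yA yb.
have E : eqcons h D gbar (fun i => y (WLower i)) (fun i => y (WUpper i))
    (dual_beta y) (fun i => y (WNonneg i)) (fun m => y (WCut m)).
  by move=> i; have := yA (inl i); rewrite lp_colsum_w /=; lra.
apply: le_trans (ereal_sup_ubound _); last first.
  exists (fun i => y (WLower i)), (fun i => y (WUpper i)), (fun i => y (WNonneg i)),
    (dual_taul y), (dual_tauu y), (dual_beta y), (fun m => y (WCut m)), (fun _ _ => 0).
  split; first exact: E.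
  split=> [i j|]; first by have := yA (inr (i, j)); have := y0 (PiNonneg (i, j));
    rewrite lp_colsum_Pi /=; lra.
  by do 4 (split; first by move=> *; exact: y0); split.
have Th0 : \sum_(i < n) \sum_(j < n) (0 : R) = 0 by rewrite big1 // => i _; rewrite big1_eq.
by rewrite Th0 lee_fin (eqcons_dotv E cN1); move: yb; rewrite lp_rhs_sum; lra.
Qed.

Lemma Pval_le_Dval : hatV h D cN -> (forall i, 0 <= vl i) -> (forall i, 0 <= vu i) ->
  (forall j, 0 <= s j) -> (Pval h D gbar cN vl vu s <= Dval h D gbar cN vl vu s)%E.
Proof.
move=> cN_feas vl0 vu0 s0; apply: lee_EFin_approx => r r_lt.
case: (@lp_certificate _ _ _ lp_coef lp_rhs lp_obj r).
- by exists lp_start => k; rewrite lp_coefE; exact: lp_start_feasible.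
- move=> x xfeas; rewrite lp_objE -lte_fin; apply: lt_le_trans r_lt _.
  by apply: lp_feasible_Psigma => k; rewrite -lp_coefE.
- by move=> y y0 [yA yb]; apply: lp_certificate_Dval cN_feas.2.1 y0 yA yb.
Qed.

End PrimalLP.

Section ReducedCoordinates.
Variables (R : realType) (k M : nat) (h : 'I_M -> R) (D : 'I_M -> 'I_k.+1 -> R).
Local Notation Vset := (@Vset R k.+2 M h D).
Local Notation hatV := (@hatV R k.+2 M h D).
Local Notation strictV := (@strictV R k.+2 M h D).
Local Notation Rmap := (@Rmap R k.+2).
Local Notation vup := (@vup R k.+2 M h D).
Local Notation vlow := (@vlow R k.+2 M h D).

Lemma Rmap_widen (v : 'I_k -> R) (i : 'I_k) :
  Rmap v (widen_ord (leqnSn k) i) = v i.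
Proof.
rewrite /Rmap; case: insubP => [j _ ji|]; last by rewrite /= ltn_ord.
by congr v; apply: val_inj; rewrite ji.
Qed.

Lemma Rmap_max (v : 'I_k -> R) : Rmap v ord_max = 1 - sumv v.
Proof. by rewrite /Rmap; case: insubP => [j /=|//]; rewrite ltnn. Qed.

Lemma sumv_Rmap (v : 'I_k -> R) : sumv (Rmap v) = 1.
Proof.
rewrite /sumv big_ord_recr /= Rmap_max.
under eq_bigr do rewrite Rmap_widen.
by rewrite -/(sumv v) addrC subrK.
Qed.

Lemma Rmap_ge0_le1 (v : 'I_k -> R) (i : 'I_k.+1) : (forall j, 0 <= v j) -> sumv v <= 1 ->
  0 <= Rmap v i <= 1.
Proof.
move=> v0 v1; have sv0 : 0 <= sumv v by apply: sumr_ge0.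
rewrite /Rmap; case: insubP => [j _ _|_]; last by apply/andP; split; lra.
rewrite v0 /=; apply: le_trans v1; rewrite /sumv (bigD1 j) //= lerDl.
exact: sumr_ge0.
Qed.

Lemma Rmap_hatV (v : 'I_k -> R) : Vset v -> hatV (Rmap v).
Proof.
move=> [v0 [v1 vD]]; split; last by split; [exact: sumv_Rmap | exact: vD].
by move=> i; have /andP[] := Rmap_ge0_le1 i v0 v1.
Qed.

Lemma strictV_Vset (v : 'I_k -> R) : strictV v -> Vset v.
Proof.
move=> [v0 [v1 vD]]; split; first by move=> i; exact: ltW.
by split=> [|m]; exact: ltW.
Qed.

Section Spread.
Variables (c : 'I_k -> R) (cV : Vset c) (i : 'I_k.+1).

Let spread := [set Rmap v i - Rmap c i | v in Vset].

Let spread0 : spread 0.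
Proof. by exists c => //; rewrite subrr. Qed.

Let spread_bounded (e : R) : spread e -> -1 <= e <= 1.
Proof.
move=> [v vV <-]; have := Rmap_ge0_le1 i vV.1 vV.2.1.
have := Rmap_ge0_le1 i cV.1 cV.2.1; move=> /andP[? ?] /andP[? ?].
by apply/andP; split; lra.
Qed.

Lemma vup_ge0 : 0 <= vup c i.
Proof.
by apply: ub_le_sup spread0; exists 1 => e /spread_bounded /andP[].
Qed.

Lemma vlow_ge0 : 0 <= vlow c i.
Proof.
rewrite /Defs.vlow oppr_ge0; apply: ge_inf spread0.
by exists (-1) => e /spread_bounded /andP[].
Qed.

End Spread.
End ReducedCoordinates.

Lemma sigmav_ge0 (R : realType) (N : nat) (gamma : R) (j : 'I_N.-1) :
  0 <= gamma -> 0 <= @sigmav R N gamma j.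
Proof. by move=> gamma0; rewrite /sigmav /varsigma divr_ge0 ?mulr_ge0 ?powR_ge0. Qed.

Unset Implicit Arguments. Set Strict Implicit.

Theorem theorem3 (R : realType) (N : nat) (x : nat -> R) (n K : nat)
  (z : 'I_n -> R) (xi : 'I_K -> 'I_n -> R) (M : nat)
  (r1 r2 r3 p h : 'I_M -> R) (c : 'I_N.-2 -> R) (gamma : R) :
  (3 <= N)%N ->
  (forall i j : nat, (i < j)%N -> (j < N)%N -> x i < x j) ->
  (0 < K)%N ->
  (forall k, x 0%N <= dotv z (xi k) <= x N.-1) ->
  (1 <= M)%N ->
  (forall m, r1 m <= r3 m) ->
  (forall m, x 0%N <= r1 m <= x N.-1) ->
  (forall m, x 0%N <= r2 m <= x N.-1) ->
  (forall m, x 0%N <= r3 m <= x N.-1) ->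
  (forall m, 0 <= p m <= 1) ->
  (forall m, h m = 1 \/ h m = -1) ->
  let D := @Delta R N x M p r1 r2 r3 in
  nonempty_interior (Vset h D) ->
  is_analytic_center h D c ->
  0 < gamma <= 1 ->
  let gbar : 'I_N.-1 -> R :=
    fun j => K%:R^-1 * \sum_(k < K) @gvec R N x (dotv z (xi k)) j in
  let cN := Rmap c in
  let vl := vlow h D c in
  let vu := vup h D c in
  let s := @sigmav R N gamma in
  Pval h D gbar cN vl vu s = Dval h D gbar cN vl vu s /\
  Lval h D gbar cN vl vu s = Dval h D gbar cN vl vu s.
Proof.
move=> N3 _ _ _ _ _ _ _ _ _ _ D _ [c_strict _] /andP[gamma0 _] gbar cN vl vu s.
have [k N_eq] : exists k, N = k.+2.
  by exists N.-2; case: N N3 {c D gbar cN vl vu s c_strict} => [|[|]].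
subst N.
have cV := strictV_Vset c_strict.
have cN_feas : hatV h D cN := Rmap_hatV cV.
have PD : (Pval h D gbar cN vl vu s <= Dval h D gbar cN vl vu s)%E.
  apply: Pval_le_Dval cN_feas _ _ _ => [i|i|j].
  - exact: vlow_ge0.
  - exact: vup_ge0.
  - exact: sigmav_ge0 (ltW gamma0).
have DL := Dval_le_Lval h D gbar cN vl vu s.
have LP := Lval_le_Pval h D gbar vl vu s cN_feas.2.1.
split; apply/le_anti.
- by rewrite PD (le_trans DL LP).
- by rewrite DL (le_trans LP PD).
Qed.
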